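(* Let $d\ge2$, $q\ge2$ and $1\le p\le q-1$ with $\gcd(p,q)=1$. For $k\ge1$ let $N_k$ be the number of $\sigma_d$-rotational sets $A\subset\mathbb{T}$ that are the union of exactly $k$ distinct $\sigma_d$-orbits and have rotation number $p/q$ (that is, $|A|=kq$ and, listing $A=\{u_0<\dots<u_{kq-1}\}$, $\sigma_d(u_j)=u_{j+kp}$ for all $j\in\mathbb{Z}/kq\mathbb{Z}$). Then $$N_1=\binom{d-2+q}{d-2},\qquad N_k=\binom{d-2+kq}{d-2}-\sum_{j=1}^{k-1}\binom{k-1}{j-1}N_j\quad\text{for }2\le k\le d-1.$$
   Context: $\mathbb{T}=\mathbb{R}/\mathbb{Z}$, ordered by representatives in $[0,1)$; $\sigma_d(t)=dt$. A finite set $\{u_0<\dots<u_{N-1}\}\subset\mathbb{T}$ (indices in $\mathbb{Z}/N\mathbb{Z}$) is $\sigma_d$-rotational if for some fixed $0\ne P\in\mathbb{Z}/N\mathbb{Z}$, $\sigma_d(u_j)=u_{j+P}$ for all $j$; its rotation number is $P/N$. *)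

(* the circle T = R/Z is represented by [0,1) with the
   concrete reals R; sigma_d(t) = frac(d t). *)
From Stdlib Require Import Reals Lia Arith List.
Open Scope R_scope.

Definition sigma (d : nat) (t : R) : R := frac_part (INR d * t).

Fixpoint binom (n k : nat) : nat :=
  match n, k with
  | _, O => 1%nat
  | O, S _ => 0%nat
  | S n', S k' => (binom n' k' + binom n' (S k'))%nat
  end.

(* A finite subset of T is represented canonically by the strictly increasing
   list u_0 < ... < u_{N-1} of its representatives in [0,1).
   [rot_set_k d p q k u] : u lists a sigma_d-rotational set which is the union
   of exactly k orbits with rotation number p/q, i.e. |A| = k q and
   sigma_d(u_j) = u_{j + k p mod k q} for all j. *)
Definition rot_set_k (d p q k : nat) (u : list R) : Prop :=
  length u = (k * q)%nat /\
  (forall j, (j < length u)%nat -> 0 <= nth j u 0 < 1) /\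
  (forall i j, (i < j)%nat -> (j < length u)%nat -> nth i u 0 < nth j u 0) /\
  (forall j, (j < length u)%nat ->
     sigma d (nth j u 0) = nth ((j + k * p) mod (k * q)) u 0).

Definition has_count (P : list R -> Prop) (n : nat) : Prop :=
  exists L : list (list R),
    NoDup L /\ (forall u, In u L <-> P u) /\ length L = n.

Definition rec_sum (N : nat -> nat) (k : nat) : nat :=
  fold_right Nat.add 0%nat
    (map (fun j => (binom (k - 1) (j - 1) * N j)%nat) (seq 1 (k - 1))).

(* A rotational set [u_0 < ... < u_(k q - 1)] is determined by the first base-[d]
   digits [dl j = floor (d u_j)]: iterating [sigma_d] along an orbit of length [q]
   gives [u_j = c_j / (d ^ q - 1)], where [c_j] is the integer whose base-[d] digits
   are those of [dl] along the orbit of [j].  Conversely a digit sequence comes from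
   a rotational set iff it is nondecreasing, bounded by [d - 1], and the codes [c_j]
   increase with [j]; the latter means that [dl] jumps right before the preimage of
   [u_0] and at least once in each of the first [k - 1] residue classes mod [k].
   Recording [dl 0], the increments of [dl] (less the forced one) and the slack
   [d - 1 - dl (k q - 1)] turns these sequences into the compositions of [d - 2]
   into [k q + 1] parts whose [k - 1] blocks of increments, one per residue class,
   are all nonzero.  Sorting all [binom (d - 2 + k q) (d - 2)] compositions of
   [d - 2] into [k q + 1] parts by their set of nonzero blocks gives the recursion. *)

From Pilot Require Import Defs.
From Stdlib Require Import Reals Lia Lra Arith List ZArith Classical.

Local Open Scope nat_scope.

Fixpoint sumn (f : nat -> nat) (n : nat) : nat :=
  match n with O => O | S m => sumn f m + f m end.

Lemma sumn_ext f g n : (forall i, i < n -> f i = g i) -> sumn f n = sumn g n.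
Proof. induction n as [|n IH]; simpl; intros H; auto. rewrite IH, H; auto. Qed.

Lemma sumnD f g n : sumn (fun i => f i + g i) n = sumn f n + sumn g n.
Proof. induction n; simpl; lia. Qed.

Lemma mul_sumn c f n : c * sumn f n = sumn (fun i => c * f i) n.
Proof. induction n; simpl; lia. Qed.

Lemma sumn_recl f n : sumn f (S n) = f 0 + sumn (fun i => f (S i)) n.
Proof. induction n; simpl in *; lia. Qed.

Lemma sumn_last f n : 1 <= n -> sumn f n = sumn f (n - 1) + f (n - 1).
Proof. destruct n; intros H; [lia|]. simpl. rewrite Nat.sub_0_r. reflexivity. Qed.

Lemma sumn_exchange (f : nat -> nat -> nat) n m :
  sumn (fun i => sumn (f i) m) n = sumn (fun j => sumn (fun i => f i j) n) m.
Proof.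
  induction n as [|n IH]; simpl.
  - induction m; simpl; lia.
  - rewrite IH, <- sumnD. reflexivity.
Qed.

Lemma sumn_split f a b : sumn f (a + b) = sumn f a + sumn (fun i => f (a + i)) b.
Proof.
  induction b as [|b IH]; simpl; [rewrite Nat.add_0_r; lia|].
  rewrite Nat.add_succ_r. simpl. rewrite IH. lia.
Qed.

Lemma sumn_blocks h k q :
  sumn h (q * k) = sumn (fun b => sumn (fun r => h (b * k + r)) k) q.
Proof.
  induction q as [|q IH]; simpl; auto.
  rewrite Nat.add_comm, sumn_split, IH. reflexivity.
Qed.

Lemma sumn_le_range f a b : a <= b -> sumn f a <= sumn f b.
Proof. intros H. replace b with (a + (b - a)) by lia. rewrite sumn_split. lia. Qed.

Lemma sumn_gt0 f n : 0 < sumn f n -> exists i, i < n /\ 0 < f i.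
Proof.
  induction n as [|n IH]; simpl; intros H; [lia|].
  destruct (f n) eqn:E.
  - destruct IH as [i [Hi Hf]]; [lia|]. exists i; split; [lia|auto].
  - exists n. split; lia.
Qed.

Lemma sumn_indicator q c : c < q -> sumn (fun b => if b =? c then 1 else 0) q = 1.
Proof.
  induction q as [|q IH]; intros H; [lia|]. simpl. destruct (Nat.eqb_spec q c).
  - subst c. rewrite (sumn_ext _ (fun _ => 0)).
    + clear; induction q; simpl; lia.
    + intros i Hi. destruct (Nat.eqb_spec i q); lia.
  - rewrite IH; lia.
Qed.

Lemma sumn_telescope (g : nat -> nat) m : (forall j, j < m -> g j <= g (S j)) ->
  g 0 + sumn (fun a => g (S a) - g a) m = g m.
Proof.
  induction m as [|m IH]; intros H; simpl; auto.
  specialize (IH (fun j Hj => H j ltac:(lia))). specialize (H m ltac:(lia)). lia.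
Qed.

Lemma list_sum_nth l : list_sum l = sumn (fun i => nth i l 0) (length l).
Proof.
  induction l as [|a l IH]; auto.
  change (list_sum (a :: l)) with (a + list_sum l).
  change (length (a :: l)) with (S (length l)). rewrite sumn_recl, IH. reflexivity.
Qed.

Lemma list_sum_map_seq f a b : list_sum (map f (seq a b)) = sumn (fun i => f (a + i)) b.
Proof.
  revert a; induction b as [|b IH]; intros a; auto.
  change (list_sum (map f (seq a (S b)))) with (f a + list_sum (map f (seq (S a) b))).
  rewrite IH, sumn_recl, Nat.add_0_r. f_equal. apply sumn_ext. intros; f_equal; lia.
Qed.

Lemma nth_map_seq {A} (F : nat -> A) n i x0 : i < n -> nth i (map F (seq 0 n)) x0 = F i.
Proof.
  intros H. rewrite (nth_indep _ _ (F 0)) by (rewrite length_map, length_seq; auto).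
  rewrite map_nth, seq_nth; auto.
Qed.

Lemma NoDup_flat_map {A B} (f : A -> list B) l :
  NoDup l -> (forall x, In x l -> NoDup (f x)) ->
  (forall x y b, In x l -> In y l -> In b (f x) -> In b (f y) -> x = y) ->
  NoDup (flat_map f l).
Proof.
  induction l as [|x l IH]; simpl; intros Hl Hf Hd; [constructor|].
  inversion Hl as [|? ? Hx Hl']; subst.
  apply NoDup_app.
  - apply Hf; auto.
  - apply IH; auto. intros x0 y b ? ? ? ?. apply (Hd x0 y b); auto.
  - intros b H1 H2. apply in_flat_map in H2. destruct H2 as [y [Hy Hb]].
    assert (x = y) by (apply (Hd x y b); auto). subst. contradiction.
Qed.

Lemma NoDup_length_eq {A} (l1 l2 : list A) :
  NoDup l1 -> NoDup l2 -> (forall x, In x l1 <-> In x l2) -> length l1 = length l2.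
Proof.
  intros H1 H2 H. apply Nat.le_antisymm; apply NoDup_incl_length; auto; intros x; apply H.
Qed.

Lemma app_inj_length {A} (x1 x2 y1 y2 : list A) :
  length x1 = length y1 -> x1 ++ x2 = y1 ++ y2 -> x1 = y1.
Proof.
  revert y1; induction x1 as [|a x1 IH]; intros [|b y1] Hl E; simpl in *; try lia; auto.
  injection E as -> E. f_equal. apply IH; auto.
Qed.

(** * Compositions *)

Lemma binom_small n k : n < k -> binom n k = 0.
Proof. revert k; induction n; intros k H; destruct k; simpl; try lia; auto. rewrite !IHn; lia. Qed.

Lemma binom_nn n : binom n n = 1.
Proof. induction n; simpl; auto. rewrite IHn, binom_small; lia. Qed.

Fixpoint compositions (L s : nat) : list (list nat) :=
  match L with
  | O => if s =? 0 then nil :: nil else nil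
  | S L' => flat_map (fun t => map (cons t) (compositions L' (s - t))) (seq 0 (S s))
  end.

Lemma compositions_spec L s x : In x (compositions L s) <-> length x = L /\ list_sum x = s.
Proof.
  revert s x; induction L as [|L IH]; intros s x.
  - simpl. destruct (Nat.eqb_spec s 0); subst; simpl.
    + split; [intros [<-|[]]; simpl; auto|]. intros [H1 H2]. destruct x; simpl in *; auto; lia.
    + split; [intros []|]. intros [H1 H2]. destruct x; simpl in *; lia.
  - cbn [compositions]. rewrite in_flat_map. split.
    + intros [t [Ht Hx]]. apply in_map_iff in Hx. destruct Hx as [y [<- Hy]].
      apply IH in Hy. apply in_seq in Ht. simpl. lia.
    + intros [H1 H2]. destruct x as [|t y]; simpl in H1, H2; [lia|].
      exists t. split; [apply in_seq; lia|]. apply in_map. apply IH. split; lia.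
Qed.

Lemma NoDup_compositions L s : NoDup (compositions L s).
Proof.
  revert s; induction L as [|L IH]; intros s; cbn [compositions].
  - destruct (s =? 0); repeat constructor; auto.
  - apply NoDup_flat_map.
    + apply seq_NoDup.
    + intros t _. apply NoDup_map_NoDup_ForallPairs; auto. intros x y _ _ H; inversion H; auto.
    + intros x y b _ _ H1 H2. apply in_map_iff in H1, H2.
      destruct H1 as [a1 [<- _]]. destruct H2 as [a2 [E _]]. inversion E; auto.
Qed.

Definition ncomp L s := length (compositions L s).

Lemma ncomp_recS L s : ncomp (S L) s = sumn (fun t => ncomp L (s - t)) (S s).
Proof.
  unfold ncomp. cbn [compositions]. rewrite length_flat_map, list_sum_map_seq.
  apply sumn_ext. intros i _. rewrite length_map. reflexivity.
Qed.

Lemma ncomp_sum0 L : ncomp L 0 = 1.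
Proof.
  unfold ncomp. replace (compositions L 0) with (repeat 0 L :: nil); auto.
  induction L as [|L IH]; simpl; auto. rewrite <- IH. reflexivity.
Qed.

Lemma ncomp_binom L s : ncomp (S L) s = binom (s + L) s.
Proof.
  assert (Hrec : forall L s, ncomp (S L) (S s) = ncomp L (S s) + ncomp (S L) s).
  { intros L' s'. rewrite !ncomp_recS, (sumn_recl _ (S s')), Nat.sub_0_r. reflexivity. }
  revert L; induction s as [|s IHs]; intros L.
  - rewrite ncomp_sum0. destruct L; reflexivity.
  - induction L as [|L IHL].
    + rewrite Hrec, IHs. change (ncomp 0 (S s)) with 0. rewrite !Nat.add_0_r. simpl. rewrite (binom_small s (S s)); lia.
    + rewrite Hrec, IHL, IHs.
      replace (S s + S L) with (S (S s + L)) by lia.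
      replace (s + S L) with (S s + L) by lia.
      change (binom (S (S s + L)) (S s)) with (binom (S s + L) s + binom (S s + L) (S s)). lia.
Qed.

Lemma ncomp_add L1 L2 s :
  ncomp (L1 + L2) s = sumn (fun t => ncomp L1 t * ncomp L2 (s - t)) (S s).
Proof.
  set (C := flat_map (fun t => flat_map (fun x1 => map (app x1) (compositions L2 (s - t)))
                                        (compositions L1 t)) (seq 0 (S s))).
  assert (HC : length C = sumn (fun t => ncomp L1 t * ncomp L2 (s - t)) (S s)).
  { unfold C. rewrite length_flat_map, list_sum_map_seq. apply sumn_ext. intros t _.
    rewrite (flat_map_constant_length (c := ncomp L2 (s - (0 + t)))); auto.
    intros x _. rewrite length_map. reflexivity. }
  rewrite <- HC. unfold ncomp. apply NoDup_length_eq.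
  - apply NoDup_compositions.
  - unfold C. apply NoDup_flat_map; [apply seq_NoDup| |].
    + intros t _. apply NoDup_flat_map; [apply NoDup_compositions| |].
      * intros x1 _. apply NoDup_map_NoDup_ForallPairs; [|apply NoDup_compositions].
        intros x y _ _ H. apply app_inv_head in H; auto.
      * intros x1 y1 b Hx Hy Hb1 Hb2. apply compositions_spec in Hx, Hy.
        apply in_map_iff in Hb1, Hb2. destruct Hb1 as [z1 [<- _]]. destruct Hb2 as [z2 [E _]].
        symmetry. apply (app_inj_length _ z2 _ z1); [lia|exact E].
    + intros t1 t2 b _ _ H1 H2. apply in_flat_map in H1, H2.
      destruct H1 as [x1 [Hx1 H1]]. destruct H2 as [x2 [Hx2 H2]].
      apply in_map_iff in H1, H2. destruct H1 as [y1 [<- _]]. destruct H2 as [y2 [E _]].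
      apply compositions_spec in Hx1, Hx2.
      apply app_inj_length in E; [|lia]. subst. lia.
  - intros x. rewrite compositions_spec. unfold C. rewrite in_flat_map. split.
    + intros [H1 H2]. rewrite <- (firstn_skipn L1 x), list_sum_app in H2.
      exists (list_sum (firstn L1 x)). split; [apply in_seq; lia|].
      apply in_flat_map. exists (firstn L1 x). split.
      * apply compositions_spec. rewrite length_firstn. split; auto. lia.
      * rewrite <- (firstn_skipn L1 x) at 1. apply in_map. apply compositions_spec.
        rewrite length_skipn. split; lia.
    + intros [t [Ht H]]. apply in_flat_map in H. destruct H as [x1 [Hx1 H]].
      apply in_map_iff in H. destruct H as [x2 [<- Hx2]]. apply compositions_spec in Hx1, Hx2.
      apply in_seq in Ht. rewrite length_app, list_sum_app. lia.
Qed.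

Definition block_comp (q a s : nat) (x : list (list nat) * list nat) : Prop :=
  length (fst x) = a /\
  (forall g, In g (fst x) -> length g = q /\ 1 <= list_sum g) /\
  length (snd x) = S q /\
  list_sum (map list_sum (fst x)) + list_sum (snd x) = s.

Fixpoint block_comps (q a s : nat) : list (list (list nat) * list nat) :=
  match a with
  | O => map (fun f => (nil, f)) (compositions (S q) s)
  | S a' => flat_map (fun t => flat_map (fun g => map (fun x => (g :: fst x, snd x))
                                                      (block_comps q a' (s - t)))
                                        (compositions q t)) (seq 1 s)
  end.

Lemma block_comps_spec q a s x : In x (block_comps q a s) <-> block_comp q a s x.
Proof.
  revert s x; induction a as [|a IH]; intros s [gs f]; unfold block_comp; cbn [block_comps fst snd].
  - rewrite in_map_iff. split.
    + intros [f' [E Hf]]. injection E as <- <-. apply compositions_spec in Hf. simpl. intuition.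
    + intros [H1 [_ [H3 H4]]]. destruct gs; [|discriminate]. simpl in H4.
      exists f. split; auto. apply compositions_spec. auto.
  - rewrite in_flat_map. split.
    + intros [t [Ht H]]. apply in_seq in Ht. apply in_flat_map in H. destruct H as [g [Hg H]].
      apply in_map_iff in H. destruct H as [[gs' f'] [E Hx]]. injection E as <- <-.
      apply IH in Hx. destruct Hx as [H1 [H2 [H3 H4]]]. apply compositions_spec in Hg.
      simpl in *. split; [lia|]. split; [|split; [auto|lia]].
      intros g' [<-|Hg']; [lia|auto].
    + intros [H1 [H2 [H3 H4]]]. destruct gs as [|g gs]; [discriminate|]. simpl in *.
      destruct (H2 g (or_introl eq_refl)) as [Hg1 Hg2].
      exists (list_sum g). split; [apply in_seq; lia|]. apply in_flat_map. exists g.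
      split; [apply compositions_spec; auto|]. apply in_map_iff. exists (gs, f). split; auto.
      apply IH. unfold block_comp; simpl. split; [lia|]. split; [auto|]. split; [auto|lia].
Qed.

Lemma NoDup_block_comps q a s : NoDup (block_comps q a s).
Proof.
  revert s; induction a as [|a IH]; intros s; cbn [block_comps].
  - apply NoDup_map_NoDup_ForallPairs; [|apply NoDup_compositions].
    intros x y _ _ H; inversion H; auto.
  - apply NoDup_flat_map; [apply seq_NoDup| |].
    + intros t _. apply NoDup_flat_map; [apply NoDup_compositions| |].
      * intros g _. apply NoDup_map_NoDup_ForallPairs; auto.
        intros [x1 x2] [y1 y2] _ _ H. simpl in H. inversion H; auto.
      * intros g1 g2 b _ _ H1 H2. apply in_map_iff in H1, H2.
        destruct H1 as [z1 [<- _]]. destruct H2 as [z2 [E _]]. inversion E; auto.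
    + intros t1 t2 b _ _ H1 H2. apply in_flat_map in H1, H2.
      destruct H1 as [g1 [Hg1 H1]]. destruct H2 as [g2 [Hg2 H2]].
      apply in_map_iff in H1, H2. destruct H1 as [z1 [<- _]]. destruct H2 as [z2 [E _]].
      inversion E; subst. apply compositions_spec in Hg1, Hg2. lia.
Qed.

Definition nblock_comps q a s := length (block_comps q a s).

Lemma nblock_comps0 q s : nblock_comps q 0 s = ncomp (S q) s.
Proof. unfold nblock_comps, ncomp. cbn [block_comps]. apply length_map. Qed.

Lemma nblock_compsS q a s :
  nblock_comps q (S a) s = sumn (fun t => ncomp q (S t) * nblock_comps q a (s - S t)) s.
Proof.
  unfold nblock_comps. cbn [block_comps].
  rewrite length_flat_map, list_sum_map_seq. apply sumn_ext. intros t _.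
  rewrite (flat_map_constant_length (c := length (block_comps q a (s - (1 + t))))); auto.
  intros x _. apply length_map.
Qed.

(* Inclusion-exclusion over the set of blocks with a positive sum: a composition
   of [a q + (q + 1)] parts is obtained from exactly one block composition with
   [i] blocks, together with a choice of the [i] positive blocks among [a]. *)
Lemma ncomp_block_comps q a s :
  ncomp (a * q + S q) s = sumn (fun i => binom a i * nblock_comps q i s) (S a).
Proof.
  revert s; induction a as [|a IH]; intros s.
  - simpl. rewrite nblock_comps0. lia.
  - replace (S a * q + S q) with (q + (a * q + S q)) by lia.
    rewrite ncomp_add, sumn_recl, ncomp_sum0, Nat.sub_0_r.
    rewrite (sumn_ext _ (fun t => sumn (fun i => binom a i * (ncomp q (S t) * nblock_comps q i (s - S t))) (S a))).
    2:{ intros t _. rewrite IH, mul_sumn. apply sumn_ext. intros; lia. }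
    rewrite sumn_exchange.
    rewrite (sumn_ext (fun j => sumn _ s) (fun i => binom a i * nblock_comps q (S i) s)).
    2:{ intros i _. rewrite nblock_compsS, mul_sumn. reflexivity. }
    rewrite IH, (sumn_recl (fun i => binom (S a) i * nblock_comps q i s) (S a)).
    rewrite (sumn_ext (fun i => binom (S a) (S i) * nblock_comps q (S i) s)
       (fun i => binom a i * nblock_comps q (S i) s + binom a (S i) * nblock_comps q (S i) s))
      by (intros; simpl; lia).
    rewrite sumnD, (sumn_recl (fun i => binom a i * nblock_comps q i s) a).
    cbn [sumn]. rewrite (binom_small a (S a)) by lia.
    replace (binom a 0) with 1 by (destruct a; reflexivity). simpl binom. lia.
Qed.

Lemma nblock_comps_binom q a s :
  nblock_comps q a s + sumn (fun i => binom a i * nblock_comps q i s) a = binom (s + S a * q) s.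
Proof.
  rewrite <- ncomp_binom. replace (S a * q) with (a * q + q) by lia.
  rewrite <- Nat.add_succ_r, ncomp_block_comps. cbn [sumn]. rewrite binom_nn. lia.
Qed.

(** * Base-[d] expansions and integer parts *)

Fixpoint base_val (d : nat) (w : nat -> nat) (L : nat) : nat :=
  match L with O => O | S L' => base_val d w L' * d + w L' end.

Lemma base_val_ext d w w' L : (forall i, i < L -> w i = w' i) -> base_val d w L = base_val d w' L.
Proof. induction L as [|L IH]; simpl; intros H; auto. rewrite IH, H; auto. Qed.

Lemma base_val_recl d w L : base_val d w (S L) = w 0 * d ^ L + base_val d (fun i => w (S i)) L.
Proof. induction L as [|L IH]; simpl; [lia|]. simpl in IH. rewrite IH. nia. Qed.

Lemma base_val_lt_pow d w L : 1 <= d -> (forall i, i < L -> w i <= d - 1) ->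
  base_val d w L + 1 <= d ^ L.
Proof.
  intros Hd; induction L as [|L IH]; simpl; intros H; [lia|].
  specialize (IH (fun i Hi => H i ltac:(lia))). specialize (H L ltac:(lia)). nia.
Qed.

Lemma base_val_lt_pred_pow d w L : 2 <= d -> (forall i, i < L -> w i <= d - 1) ->
  (exists i, i < L /\ w i <= d - 2) -> base_val d w L + 2 <= d ^ L.
Proof.
  intros Hd; induction L as [|L IH]; simpl; intros H [i [Hi Hw]]; [lia|].
  assert (HB := base_val_lt_pow d w L ltac:(lia) (fun i Hi => H i ltac:(lia))).
  destruct (Nat.eq_dec i L).
  - subst i. assert (base_val d w L * d + d <= d ^ L * d) by nia. lia.
  - assert (IHL : base_val d w L + 2 <= d ^ L).
    { apply IH; [intros j Hj; apply H; lia|]. exists i; split; [lia|auto]. }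
    specialize (H L ltac:(lia)). assert (base_val d w L * d + 2 * d <= d ^ L * d) by nia. lia.
Qed.

Lemma base_val_lex d a b L m : 1 <= d ->
  (forall i, i < L -> a i <= d - 1 /\ b i <= d - 1) -> m <= L ->
  (forall i, i < m -> a i <= b i) -> (exists i, i < m /\ a i < b i) ->
  base_val d a L < base_val d b L.
Proof.
  intros Hd. revert a b L; induction m as [|m IH]; intros a b L Hab HmL Hle [i [Hi Hlt]]; [lia|].
  destruct L as [|L]; [lia|].
  rewrite !base_val_recl.
  assert (B := base_val_lt_pow d (fun i => a (S i)) L Hd (fun i Hi => proj1 (Hab (S i) ltac:(lia)))).
  destruct (Nat.eq_dec (a 0) (b 0)) as [E|E].
  - destruct i as [|i]; [lia|].
    assert (base_val d (fun i => a (S i)) L < base_val d (fun i => b (S i)) L).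
    { apply (IH _ _ L); try lia.
      - intros j Hj; apply Hab; lia.
      - intros j Hj; apply Hle; lia.
      - exists i; split; [lia|auto]. }
    rewrite E. lia.
  - assert (a 0 < b 0) by (specialize (Hle 0 ltac:(lia)); lia).
    assert (a 0 * d ^ L + d ^ L <= b 0 * d ^ L) by nia. lia.
Qed.

(* Multiplying by [d] shifts a periodic digit string by one place. *)
Lemma base_val_shift d w L : 1 <= L -> w L = w 0 ->
  d * base_val d w L + w 0 = base_val d (fun i => w (S i)) L + w 0 * d ^ L.
Proof.
  intros HL Hw. destruct L as [|L]; [lia|].
  rewrite base_val_recl. simpl base_val. rewrite Hw. simpl Nat.pow. nia.
Qed.

Lemma mod_succ x n : 0 < n -> x mod n <> n - 1 -> (x + 1) mod n = x mod n + 1.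
Proof.
  intros Hn H. rewrite (Nat.div_mod_eq x n) at 1.
  assert (x mod n < n) by (apply Nat.mod_upper_bound; lia).
  replace (n * (x / n) + x mod n + 1) with ((x mod n + 1) + (x / n) * n) by lia.
  rewrite Nat.Div0.mod_add. apply Nat.mod_small. lia.
Qed.

Lemma divmod_block b k r : r < k -> (b * k + r) / k = b /\ (b * k + r) mod k = r.
Proof.
  intros H. split.
  - rewrite Nat.div_add_l by lia. rewrite Nat.div_small by auto. lia.
  - rewrite Nat.add_comm, Nat.Div0.mod_add. apply Nat.mod_small; auto.
Qed.


Lemma nondecreasing_le (g : nat -> nat) n : (forall j, S j < n -> g j <= g (S j)) ->
  forall i j, i <= j -> j < n -> g i <= g j.
Proof.
  intros H i j Hij Hj. induction j as [|j IH].
  - replace i with 0 by lia. lia.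
  - destruct (Nat.eq_dec i (S j)); [subst; lia|].
    specialize (H j Hj). specialize (IH ltac:(lia) ltac:(lia)). lia.
Qed.

Lemma Int_part_le_mono x y : (x <= y)%R -> (Int_part x <= Int_part y)%Z.
Proof.
  intros H. destruct (base_Int_part x) as [Hx1 Hx2]. destruct (base_Int_part y) as [Hy1 Hy2].
  assert (Hlt : (IZR (Int_part x) < IZR (Int_part y + 1))%R) by (rewrite plus_IZR; lra).
  apply lt_IZR in Hlt. lia.
Qed.

Lemma INR_floor_nat x : (0 <= x)%R -> INR (Z.to_nat (Int_part x)) = IZR (Int_part x).
Proof.
  intros Hx. destruct (base_Int_part x) as [H1 H2].
  assert (Hlt : (IZR (-1) < IZR (Int_part x))%R) by lra. apply lt_IZR in Hlt.
  rewrite INR_IZR_INZ, Z2Nat.id by lia. reflexivity.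
Qed.

Lemma floor_nat_lt x n : (0 <= x < INR n)%R -> Z.to_nat (Int_part x) < n.
Proof.
  intros Hx. destruct (base_Int_part x) as [H1 H2].
  assert (Hlt : (Int_part x < Z.of_nat n)%Z) by (apply lt_IZR; rewrite <- INR_IZR_INZ; lra).
  assert (Hge : (IZR (-1) < IZR (Int_part x))%R) by lra. apply lt_IZR in Hge. lia.
Qed.

Lemma frac_part_INR_plus (m : nat) x : (0 <= x < 1)%R -> frac_part (INR m + x) = x.
Proof.
  intros H. symmetry. apply (Int_part_frac_part_spec (INR m + x) (Z.of_nat m) x H).
  rewrite <- INR_IZR_INZ. reflexivity.
Qed.

(** * Digit sequences of rotational sets *)

Section Rotational.

Variables d k q p : nat.
Hypotheses (Hd : 2 <= d) (Hk : 1 <= k) (Hp : 1 <= p < q) (Hgcd : Nat.gcd p q = 1).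

(* Position of [sigma^i(u_j)] in a rotational set of [k q] points with rotation
   number [p / q]. *)
Local Notation orb j i := ((j + i * (k * p)) mod (k * q)).

Lemma orb_lt j i : orb j i < k * q.
Proof. apply Nat.mod_upper_bound. nia. Qed.

Lemma orb_mod_k j i : orb j i mod k = j mod k.
Proof.
  rewrite Nat.Div0.mod_mul_r.
  rewrite (Nat.mul_comm k (((j + i * (k * p)) / k) mod q)), Nat.Div0.mod_add, Nat.Div0.mod_mod.
  replace (i * (k * p)) with ((i * p) * k) by lia. apply Nat.Div0.mod_add.
Qed.

Lemma orb_add j i i' : orb (orb j i) i' = orb j (i + i').
Proof. rewrite Nat.Div0.add_mod_idemp_l. f_equal. lia. Qed.

Lemma orb_period j : orb j q = j mod (k * q).
Proof. replace (q * (k * p)) with (p * (k * q)) by lia. apply Nat.Div0.mod_add. Qed.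

Lemma last_mod_k : (k * q - 1) mod k = k - 1.
Proof. replace (k * q - 1) with ((k - 1) + (q - 1) * k) by nia. rewrite Nat.Div0.mod_add. apply Nat.mod_small. lia. Qed.

Lemma forced_mod_k : (k * q - 1 - k * p) mod k = k - 1.
Proof.
  replace (k * q - 1 - k * p) with ((k - 1) + (q - 1 - p) * k) by nia.
  rewrite Nat.Div0.mod_add. apply Nat.mod_small. lia.
Qed.

Lemma orb_succ j i : orb j i <> k * q - 1 -> orb (S j) i = S (orb j i).
Proof.
  intros H. replace (S j + i * (k * p)) with (j + i * (k * p) + 1) by lia.
  rewrite mod_succ; [lia|nia|exact H].
Qed.

(* Since [gcd p q = 1], the orbit of [j] meets every position of its residue class mod [k]. *)
Lemma orb_onto j a : j mod k = a mod k -> a < k * q -> exists i, i < q /\ orb j i = a.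
Proof.
  intros Hr Ha.
  destruct (Nat.gcd_bezout_pos p q ltac:(lia)) as [u [v Huv]]. rewrite Hgcd in Huv.
  set (j1 := j / k). set (a1 := a / k). set (r := a mod k).
  assert (Ej : j = k * j1 + r) by (unfold j1, r; rewrite <- Hr; apply Nat.div_mod_eq).
  assert (Ea : a = k * a1 + r) by (unfold a1, r; apply Nat.div_mod_eq).
  assert (Hrk : r < k) by (apply Nat.mod_upper_bound; lia).
  assert (Ha1 : a1 < q) by (unfold a1; apply Nat.Div0.div_lt_upper_bound; lia).
  set (c := a1 + (q - 1) * j1).
  exists ((c * u) mod q). split; [apply Nat.mod_upper_bound; lia|].
  replace (j + (c * u) mod q * (k * p)) with (k * (j1 + (c * u) mod q * p) + r) by (rewrite Ej; lia).
  rewrite Nat.Div0.add_mul_mod_distr_l by lia. rewrite Ea. f_equal. f_equal.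
  rewrite Nat.Div0.add_mod, Nat.Div0.mul_mod_idemp_l, <- Nat.Div0.add_mod.
  replace (j1 + c * u * p) with (a1 + (j1 + c * v) * q) by (unfold c; nia).
  rewrite Nat.Div0.mod_add. apply Nat.mod_small; auto.
Qed.

Lemma orb_inj j i i' : i < q -> i' < q -> orb j i = orb j i' -> i = i'.
Proof.
  assert (W : forall i i', i <= i' -> i' < q -> orb j i = orb j i' -> i = i').
  { clear i i'. intros i i' Hle Hi' E.
    set (x := j + i * (k * p)) in *. set (y := j + i' * (k * p)) in *.
    assert (Ex := Nat.div_mod_eq x (k * q)). assert (Ey := Nat.div_mod_eq y (k * q)).
    assert (Hxy : y = x + (i' - i) * (k * p)) by (unfold x, y; replace i' with (i + (i' - i)) at 1 by lia; ring).
    set (Qx := x / (k * q)) in *. set (Qy := y / (k * q)) in *.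
    assert (H1 : (i' - i) * (k * p) = k * q * (Qy - Qx)).
    { rewrite Nat.mul_sub_distr_l. rewrite E in Ex. set (w := (i' - i) * (k * p)) in *.
      set (A := k * q * Qx) in *. set (B := k * q * Qy) in *. lia. }
    assert (H2 : (i' - i) * p = q * (Qy - Qx)).
    { apply (Nat.mul_cancel_l _ _ k); [lia|]. rewrite Nat.mul_assoc, (Nat.mul_comm k (i' - i)), <- Nat.mul_assoc, H1. ring. }
    assert (Hdiv : Nat.divide q (p * (i' - i))) by (exists (Qy - Qx); lia).
    apply Nat.gauss in Hdiv; [|rewrite Nat.gcd_comm; auto].
    destruct Hdiv as [[|z] Hz]; lia. }
  intros Hi Hi' E. destruct (Nat.le_ge_cases i i'); [apply W; auto|symmetry; apply W; auto].
Qed.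

Lemma orb_pred_last y : y < k * q -> orb y 1 = k * q - 1 -> y = k * q - 1 - k * p.
Proof.
  intros Hy E. rewrite Nat.mul_1_l in E. destruct (Nat.lt_ge_cases (y + k * p) (k * q)).
  - rewrite Nat.mod_small in E; nia.
  - replace (y + k * p) with ((y + k * p - k * q) + 1 * (k * q)) in E by lia.
    rewrite Nat.Div0.mod_add, Nat.mod_small in E; nia.
Qed.

(* [dl j] is the first base-[d] digit of [u_j], i.e. [sigma_d (u_j) = d u_j - dl j];
   the itinerary of [u_j] is then read along its orbit and [u_j] is the periodic
   base-[d] expansion [orbit_code dl j / (d ^ q - 1)]. *)
Definition orbit_code (dl : nat -> nat) (j : nat) : nat := base_val d (fun i => dl (orb j i)) q.

(* The digit sequences of rotational sets: nondecreasing, a forced jump just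
   before the preimage of [u_0], and a jump in each of the first [k - 1]
   residue classes mod [k] (the last class already contains the forced jump). *)
Definition admissible (dl : nat -> nat) : Prop :=
  (forall j, S j < k * q -> dl j <= dl (S j)) /\
  dl (k * q - 1) <= d - 1 /\
  dl (k * q - 1 - k * p) < dl (k * q - k * p) /\
  (forall r, r < k - 1 -> exists a, a < k * q - 1 /\ a mod k = r /\ dl a < dl (S a)).

Lemma admissible_le dl : admissible dl -> forall j, j < k * q -> dl j <= d - 1.
Proof.
  intros [Hm [Hl _]] j Hj.
  assert (dl j <= dl (k * q - 1)) by (apply (nondecreasing_le dl (k * q)); auto; lia). lia.
Qed.

Lemma admissible_small_digit dl : admissible dl ->
  forall c, c < k -> exists y, y < k * q /\ y mod k = c /\ dl y <= d - 2.
Proof.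
  intros Hv c Hc. assert (Hle := admissible_le dl Hv). destruct Hv as [_ [_ [Hf Hr]]].
  destruct (Nat.eq_dec c (k - 1)) as [->|Hne].
  - exists (k * q - 1 - k * p). split; [nia|]. split; [apply forced_mod_k|].
    assert (dl (k * q - k * p) <= d - 1) by (apply Hle; nia). lia.
  - destruct (Hr c ltac:(lia)) as [a [Ha [Hac Hj]]].
    exists a. split; [lia|]. split; auto.
    assert (dl (S a) <= d - 1) by (apply Hle; lia). lia.
Qed.

(* Each orbit contains a digit [<= d - 2], so [orbit_code dl j / (d ^ q - 1) < 1]. *)
Lemma orbit_code_lt dl : admissible dl -> forall j, orbit_code dl j + 2 <= d ^ q.
Proof.
  intros Hv j. apply base_val_lt_pred_pow; auto.
  - intros i _. apply (admissible_le dl Hv), orb_lt.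
  - destruct (admissible_small_digit dl Hv (j mod k)) as [y [Hy [Hyc Hyd]]];
      [apply Nat.mod_upper_bound; lia|].
    destruct (orb_onto j y) as [i [Hi Ei]]; auto.
    exists i. rewrite Ei. auto.
Qed.

Lemma orbit_code_lt_succ dl j m :
  (forall j, S j < k * q -> dl j <= dl (S j)) -> (forall j, j < k * q -> dl j <= d - 1) ->
  m <= q -> (forall i, i < m -> orb j i <> k * q - 1) ->
  (exists i, i < m /\ dl (orb j i) < dl (S (orb j i))) ->
  orbit_code dl j < orbit_code dl (S j).
Proof.
  intros Hm Hle Hmq Hne [i0 [Hi0 Hjump]].
  apply (base_val_lex d _ _ q m); try lia.
  - intros i _. split; apply Hle, orb_lt.
  - intros i Hi. rewrite orb_succ by auto. apply Hm.
    specialize (Hne i Hi). pose proof (orb_lt j i). lia.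
  - exists i0. split; auto. rewrite orb_succ by auto. exact Hjump.
Qed.

Lemma orbit_code_increasing dl : admissible dl ->
  forall j, S j < k * q -> orbit_code dl j < orbit_code dl (S j).
Proof.
  intros Hv j Hj. assert (Hle := admissible_le dl Hv). assert (Hv' := Hv).
  destruct Hv' as [Hm [_ [Hf Hr]]].
  destruct (Nat.eq_dec (j mod k) (k - 1)) as [Ec|Ec].
  - (* the orbit of [j] reaches [k q - 1] right after the forced jump *)
    destruct (orb_onto j (k * q - 1)) as [i1 [Hi Ei]]; [rewrite last_mod_k; auto|lia|].
    destruct i1 as [|i0].
    + rewrite Nat.mul_0_l, Nat.add_0_r, Nat.mod_small in Ei; lia.
    + apply (orbit_code_lt_succ dl j (S i0)); [exact Hm|exact Hle|lia| |].
      * intros i Hi' E. assert (i = S i0) by (apply (orb_inj j); try lia; congruence). lia.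
      * exists i0. split; [lia|].
        rewrite (orb_pred_last (orb j i0)); [|apply orb_lt|rewrite orb_add, Nat.add_1_r; auto].
        replace (S (k * q - 1 - k * p)) with (k * q - k * p) by nia. exact Hf.
  - destruct (Hr (j mod k)) as [a [Ha [Hac Hja]]].
    { assert (j mod k < k) by (apply Nat.mod_upper_bound; lia). lia. }
    destruct (orb_onto j a) as [i [Hi Ei]]; [auto|lia|].
    apply (orbit_code_lt_succ dl j q); [exact Hm|exact Hle|lia| |].
    + intros i' _ E. apply (f_equal (fun x => x mod k)) in E.
      rewrite orb_mod_k, last_mod_k in E. lia.
    + exists i. rewrite Ei. auto.
Qed.

Lemma orbit_code_shift dl j : j < k * q ->
  d * orbit_code dl j + dl j = orbit_code dl ((j + k * p) mod (k * q)) + dl j * d ^ q.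
Proof.
  intros Hj. unfold orbit_code.
  replace ((j + k * p) mod (k * q)) with (orb j 1) by (rewrite Nat.mul_1_l; reflexivity).
  assert (E0 : orb j 0 = j) by (rewrite Nat.mul_0_l, Nat.add_0_r; apply Nat.mod_small; auto).
  assert (Hw : dl (orb j q) = dl (orb j 0)) by (rewrite orb_period, E0, Nat.mod_small; auto).
  assert (HS := base_val_shift d (fun i => dl (orb j i)) q ltac:(lia) Hw). cbv beta in HS.
  rewrite E0 in HS. rewrite HS.
  f_equal. apply base_val_ext. intros i _. rewrite orb_add. reflexivity.
Qed.

Section CodeIncreasing.

Variable dl : nat -> nat.
Hypotheses (Hm : forall j, S j < k * q -> dl j <= dl (S j))
  (Hle : forall j, j < k * q -> dl j <= d - 1)
  (Hinc : forall j, S j < k * q -> orbit_code dl j < orbit_code dl (S j)).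

Lemma forced_jump_of_code_increasing : dl (k * q - 1 - k * p) < dl (k * q - k * p).
Proof.
  assert (Hmono := nondecreasing_le dl (k * q) Hm).
  destruct (Nat.lt_ge_cases (dl (k * q - 1 - k * p)) (dl (k * q - k * p))) as [Hlt|Hge]; auto.
  exfalso.
  assert (Hcode := Hinc (k * q - 1 - k * p) ltac:(nia)).
  replace (S (k * q - 1 - k * p)) with (k * q - k * p) in Hcode by nia.
  destruct (Nat.eq_dec (dl 0) (dl (k * q - 1))) as [E0|E0].
  - (* all digits are equal, so the first two codes coincide *)
    assert (Hc : forall m, m < k * q -> dl m = dl 0).
    { intros m Hm'. pose proof (Hmono 0 m ltac:(lia) Hm').
      pose proof (Hmono m (k * q - 1) ltac:(lia) ltac:(nia)). lia. }
    specialize (Hinc 0 ltac:(nia)). unfold orbit_code in Hinc.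
    rewrite (base_val_ext d _ (fun _ => dl 0)) in Hinc by (intros; apply Hc, orb_lt).
    rewrite (base_val_ext d (fun i => dl (orb 1 i)) (fun _ => dl 0)) in Hinc
      by (intros; apply Hc, orb_lt).
    lia.
  - (* otherwise the codes at [k q - k p] and [k q - 1 - k p] first differ in their
       second digits, [dl 0 < dl (k q - 1)] *)
    assert (orbit_code dl (k * q - k * p) < orbit_code dl (k * q - 1 - k * p)); [|lia].
    assert (Hlt : dl 0 < dl (k * q - 1)) by (pose proof (Hmono 0 (k * q - 1) ltac:(lia) ltac:(nia)); lia).
    assert (E1 : orb (k * q - k * p) 1 = 0).
    { rewrite Nat.mul_1_l. replace (k * q - k * p + k * p) with (0 + 1 * (k * q)) by nia.
      rewrite Nat.Div0.mod_add. apply Nat.Div0.mod_0_l. }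
    assert (E2 : orb (k * q - 1 - k * p) 1 = k * q - 1).
    { rewrite Nat.mul_1_l. replace (k * q - 1 - k * p + k * p) with (k * q - 1) by nia.
      apply Nat.mod_small. nia. }
    unfold orbit_code. apply (base_val_lex d _ _ q 2); try lia.
    + intros i _. split; apply Hle, orb_lt.
    + intros [|[|i]] Hi; try lia.
      * rewrite !Nat.mul_0_l, !Nat.add_0_r, !Nat.mod_small by nia. lia.
      * rewrite E1, E2. lia.
    + exists 1. rewrite E1, E2. lia.
Qed.

Lemma class_jump_of_code_increasing r : r < k - 1 ->
  exists a, a < k * q - 1 /\ a mod k = r /\ dl a < dl (S a).
Proof.
  intros Hrk. apply NNPP. intros Hno.
  assert (Hflat : forall a, a < k * q - 1 -> a mod k = r -> dl (S a) = dl a).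
  { intros a Ha Har. specialize (Hm a ltac:(lia)).
    destruct (Nat.lt_ge_cases (dl a) (dl (S a))); [|lia].
    exfalso. apply Hno. exists a. auto. }
  specialize (Hinc r ltac:(nia)). unfold orbit_code in Hinc.
  rewrite (base_val_ext d (fun i => dl (orb (S r) i)) (fun i => dl (orb r i))) in Hinc; [lia|].
  intros i _.
  assert (Hcl : orb r i mod k = r) by (rewrite orb_mod_k; apply Nat.mod_small; lia).
  assert (Hne : orb r i <> k * q - 1) by (intros E; rewrite E, last_mod_k in Hcl; lia).
  rewrite orb_succ by auto. apply Hflat; auto. pose proof (orb_lt r i). lia.
Qed.

Lemma admissible_of_code_increasing : admissible dl.
Proof.
  split; [exact Hm|]. split; [apply Hle; nia|]. split.
  - exact forced_jump_of_code_increasing.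
  - exact class_jump_of_code_increasing.
Qed.

End CodeIncreasing.

Lemma pow_pred_pos : (0 < INR (d ^ q - 1))%R.
Proof. apply lt_0_INR. assert (d ^ 1 <= d ^ q) by (apply Nat.pow_le_mono_r; lia). simpl in *. lia. Qed.

Definition rot_list (dl : nat -> nat) : list R :=
  map (fun j => (INR (orbit_code dl j) / INR (d ^ q - 1))%R) (seq 0 (k * q)).

Lemma rot_list_length dl : length (rot_list dl) = k * q.
Proof. unfold rot_list. rewrite length_map, length_seq. reflexivity. Qed.

Lemma rot_list_nth dl j : j < k * q ->
  nth j (rot_list dl) 0%R = (INR (orbit_code dl j) / INR (d ^ q - 1))%R.
Proof. intros Hj. unfold rot_list. rewrite nth_map_seq; auto. Qed.

Lemma rot_list_ext dl dl' : (forall j, j < k * q -> dl j = dl' j) -> rot_list dl = rot_list dl'.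
Proof.
  intros H. unfold rot_list. apply map_ext. intros j. unfold orbit_code.
  rewrite (base_val_ext d _ (fun i => dl' (orb j i))); auto. intros i _. apply H, orb_lt.
Qed.

Lemma rot_list_shift dl j : j < k * q ->
  (INR d * (INR (orbit_code dl j) / INR (d ^ q - 1)) =
   INR (dl j) + INR (orbit_code dl ((j + k * p) mod (k * q))) / INR (d ^ q - 1))%R.
Proof.
  intros Hj. pose proof pow_pred_pos as HE.
  assert (Hpow : 1 <= d ^ q) by (apply Nat.neq_0_lt_0, Nat.pow_nonzero; lia).
  assert (Hn : d * orbit_code dl j = orbit_code dl ((j + k * p) mod (k * q)) + dl j * (d ^ q - 1)).
  { rewrite Nat.mul_sub_distr_l. pose proof (orbit_code_shift dl j Hj). nia. }
  apply (f_equal INR) in Hn. rewrite mult_INR, plus_INR, mult_INR in Hn.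
  field_simplify_eq; [|lra]. rewrite Hn. ring.
Qed.

Lemma rot_list_rot_set dl : admissible dl -> rot_set_k d p q k (rot_list dl).
Proof.
  intros Hv. pose proof pow_pred_pos as HE.
  assert (Hrange : forall j, (0 <= INR (orbit_code dl j) / INR (d ^ q - 1) < 1)%R).
  { intros j. assert (HB := orbit_code_lt dl Hv j). split.
    - apply Rmult_le_pos; [apply pos_INR|left; apply Rinv_0_lt_compat; auto].
    - apply (Rmult_lt_reg_r (INR (d ^ q - 1))); auto. unfold Rdiv.
      rewrite Rmult_assoc, Rinv_l, Rmult_1_r, Rmult_1_l by lra. apply lt_INR. lia. }
  assert (Hinc : forall i j, i < j -> j < k * q -> orbit_code dl i < orbit_code dl j).
  { intros i j Hij Hj. induction j as [|j IH]; [lia|].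
    pose proof (orbit_code_increasing dl Hv j Hj).
    destruct (Nat.eq_dec i j) as [->|]; [auto|]. specialize (IH ltac:(lia) ltac:(lia)). lia. }
  unfold rot_set_k. rewrite rot_list_length. split; [auto|]. split; [|split].
  - intros j Hj. rewrite rot_list_nth; auto.
  - intros i j Hij Hj. rewrite !rot_list_nth by lia.
    apply Rmult_lt_compat_r; [apply Rinv_0_lt_compat; auto|]. apply lt_INR; auto.
  - intros j Hj. unfold Defs.sigma. rewrite !rot_list_nth by (auto; apply Nat.mod_upper_bound; lia).
    rewrite rot_list_shift by auto. apply frac_part_INR_plus, Hrange.
Qed.

Lemma rot_list_inj dl dl' : rot_list dl = rot_list dl' -> forall j, j < k * q -> dl j = dl' j.
Proof.
  intros E j Hj.
  assert (E1 := f_equal (fun l => nth j l 0%R) E).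
  assert (E2 := f_equal (fun l => nth ((j + k * p) mod (k * q)) l 0%R) E). cbv beta in E1, E2.
  rewrite !rot_list_nth in E1, E2 by (auto; apply Nat.mod_upper_bound; lia).
  assert (H1 := rot_list_shift dl j Hj). assert (H2 := rot_list_shift dl' j Hj).
  rewrite E1, E2 in H1. rewrite H1 in H2. apply INR_eq. lra.
Qed.

Section FirstDigits.

Variable u : list R.
Hypothesis Hu : rot_set_k d p q k u.

Definition first_digit (j : nat) : nat := Z.to_nat (Int_part (INR d * nth j u 0%R)).

Lemma rot_set_range j : j < k * q -> (0 <= nth j u 0%R < 1)%R.
Proof. destruct Hu as [Hlen [Hr _]]. intros Hj. apply Hr. lia. Qed.

Lemma first_digit_le j : j < k * q -> first_digit j <= d - 1.
Proof.
  intros Hj. destruct (rot_set_range j Hj).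
  assert (first_digit j < d); [|lia].
  apply floor_nat_lt. split; [apply Rmult_le_pos; [apply pos_INR|auto]|].
  assert (0 < INR d)%R by (apply lt_0_INR; lia). nra.
Qed.

Lemma first_digit_step j : j < k * q ->
  (INR d * nth j u 0%R = INR (first_digit j) + nth (orb j 1) u 0%R)%R.
Proof.
  intros Hj. destruct Hu as [Hlen [_ [_ Hsig]]]. destruct (rot_set_range j Hj).
  unfold first_digit. rewrite INR_floor_nat by (apply Rmult_le_pos; [apply pos_INR|auto]).
  rewrite Nat.mul_1_l, <- Hsig by lia. apply Rplus_Int_part_frac_part.
Qed.

Lemma first_digit_iter j i : j < k * q ->
  (INR (d ^ i) * nth j u 0%R =
   INR (base_val d (fun i => first_digit (orb j i)) i) + nth (orb j i) u 0%R)%R.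
Proof.
  intros Hj. induction i as [|i IH].
  - simpl. rewrite Nat.add_0_r, Nat.mod_small by auto. lra.
  - rewrite Nat.pow_succ_r', mult_INR. simpl base_val. rewrite plus_INR, mult_INR.
    rewrite Rmult_assoc, IH, Rmult_plus_distr_l, first_digit_step by apply orb_lt.
    rewrite orb_add, Nat.add_1_r. ring.
Qed.

Lemma rot_set_code j : j < k * q ->
  nth j u 0%R = (INR (orbit_code first_digit j) / INR (d ^ q - 1))%R.
Proof.
  intros Hj. pose proof pow_pred_pos as HE.
  assert (Hpow : 1 <= d ^ q) by (apply Nat.neq_0_lt_0, Nat.pow_nonzero; lia).
  assert (H := first_digit_iter j q Hj). rewrite orb_period, Nat.mod_small in H by auto.
  unfold orbit_code. apply (Rmult_eq_reg_r (INR (d ^ q - 1))); [|lra].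
  unfold Rdiv. rewrite Rmult_assoc, Rinv_l, Rmult_1_r by lra.
  rewrite minus_INR by auto. simpl INR at 2. lra.
Qed.

Lemma first_digit_mono j : S j < k * q -> first_digit j <= first_digit (S j).
Proof.
  intros Hj. destruct Hu as [Hlen [_ [Hinc _]]]. unfold first_digit.
  assert (Int_part (INR d * nth j u 0%R) <= Int_part (INR d * nth (S j) u 0%R))%Z; [|lia].
  apply Int_part_le_mono, Rmult_le_compat_l; [apply pos_INR|]. left. apply Hinc; lia.
Qed.

Lemma rot_set_admissible : admissible first_digit /\ u = rot_list first_digit.
Proof.
  pose proof pow_pred_pos as HE. destruct Hu as [Hlen [_ [Hinc _]]].
  split.
  - apply admissible_of_code_increasing; [exact first_digit_mono|exact first_digit_le|].
    intros j Hj. assert (H := Hinc j (S j) ltac:(lia) ltac:(lia)).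
    rewrite !rot_set_code in H by lia. apply INR_lt.
    apply Rmult_lt_reg_r with (/ INR (d ^ q - 1))%R; [apply Rinv_0_lt_compat; auto|exact H].
  - apply nth_ext with 0%R 0%R; [rewrite rot_list_length; auto|].
    intros j Hj. rewrite rot_list_nth, rot_set_code; auto; lia.
Qed.

End FirstDigits.

(* Block [r < k - 1] lists the increments [dl (S a) - dl a] at the positions
   [a = b k + r]; the tail lists [dl 0], the increments at the positions
   [b k + k - 1] (less one at the forced jump, [b = q - p - 1]) and finally the
   slack [d - 1 - dl (k q - 1)]. *)
Definition blocks_incr (gs : list (list nat)) (f : list nat) (a : nat) : nat :=
  if a mod k <? k - 1 then nth (a / k) (nth (a mod k) gs nil) 0
  else nth (S (a / k)) f 0 + (if a / k =? q - p - 1 then 1 else 0).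

Definition digits_of_blocks (x : list (list nat) * list nat) (j : nat) : nat :=
  nth 0 (snd x) 0 + sumn (blocks_incr (fst x) (snd x)) j.

Definition blocks_of_digits (dl : nat -> nat) : list (list nat) * list nat :=
  (map (fun r => map (fun b => dl (S (b * k + r)) - dl (b * k + r)) (seq 0 q)) (seq 0 (k - 1)),
   dl 0 :: map (fun b => dl (S (b * k + (k - 1))) - dl (b * k + (k - 1))
                         - (if b =? q - p - 1 then 1 else 0)) (seq 0 (q - 1))
        ++ d - 1 - dl (k * q - 1) :: nil).

Lemma blocks_incr_block gs f b r : r < k - 1 -> blocks_incr gs f (b * k + r) = nth b (nth r gs nil) 0.
Proof.
  intros Hr. unfold blocks_incr. destruct (divmod_block b k r ltac:(lia)) as [-> ->].
  replace (r <? k - 1) with true by (symmetry; apply Nat.ltb_lt; lia). reflexivity.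
Qed.

Lemma blocks_incr_tail gs f b :
  blocks_incr gs f (b * k + (k - 1)) = nth (S b) f 0 + (if b =? q - p - 1 then 1 else 0).
Proof.
  unfold blocks_incr. destruct (divmod_block b k (k - 1) ltac:(lia)) as [-> ->].
  rewrite Nat.ltb_irrefl. reflexivity.
Qed.

Lemma blocks_incr_last gs f : blocks_incr gs f (k * q - 1) = nth q f 0.
Proof.
  replace (k * q - 1) with ((q - 1) * k + (k - 1)) by nia. rewrite blocks_incr_tail.
  destruct (Nat.eqb_spec (q - 1) (q - p - 1)); [lia|]. replace (S (q - 1)) with q by lia. lia.
Qed.

Lemma blocks_incr_forced gs f : 1 <= blocks_incr gs f (k * q - 1 - k * p).
Proof.
  replace (k * q - 1 - k * p) with ((q - p - 1) * k + (k - 1)) by nia.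
  rewrite blocks_incr_tail, Nat.eqb_refl. lia.
Qed.

Lemma sumn_blocks_incr gs f : length gs = k - 1 -> (forall g, In g gs -> length g = q) ->
  length f = S q ->
  nth 0 f 0 + sumn (blocks_incr gs f) (k * q) = 1 + list_sum (map list_sum gs) + list_sum f.
Proof.
  intros Hgs Hg Hf.
  rewrite Nat.mul_comm, sumn_blocks, sumn_exchange, (sumn_last _ k) by lia. cbv beta.
  rewrite (sumn_ext _ _ q (fun b _ => blocks_incr_tail gs f b)), sumnD, sumn_indicator by lia.
  rewrite (sumn_ext (fun r => sumn (fun b => blocks_incr gs f (b * k + r)) q)
                    (fun r => nth r (map list_sum gs) 0)).
  2:{ intros r Hr. rewrite (nth_indep _ _ (list_sum nil)) by (rewrite length_map; lia).
      rewrite map_nth, list_sum_nth, Hg by (apply nth_In; lia).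
      apply sumn_ext. intros b _. apply blocks_incr_block. lia. }
  rewrite (list_sum_nth (map list_sum gs)), length_map, Hgs.
  rewrite (list_sum_nth f), Hf, sumn_recl. lia.
Qed.

Lemma digits_of_blocks_admissible x : block_comp q (k - 1) (d - 2) x -> admissible (digits_of_blocks x).
Proof.
  destruct x as [gs f]. intros [H1 [H2 [H3 H4]]]. simpl in *.
  assert (HR := sumn_blocks_incr gs f H1 (fun g Hg => proj1 (H2 g Hg)) H3).
  unfold admissible, digits_of_blocks; simpl. split; [|split; [|split]].
  - intros j _. simpl. lia.
  - replace (k * q) with (S (k * q - 1)) in HR by nia. simpl in HR. lia.
  - replace (k * q - k * p) with (S (k * q - 1 - k * p)) by nia. simpl.
    pose proof (blocks_incr_forced gs f). lia.
  - intros r Hr. assert (Hin : In (nth r gs nil) gs) by (apply nth_In; lia).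
    destruct (H2 _ Hin) as [Hl Hs]. rewrite list_sum_nth, Hl in Hs.
    destruct (sumn_gt0 _ _ Hs) as [b [Hb Hpos]].
    exists (b * k + r). split; [nia|]. split; [apply divmod_block; lia|].
    simpl. rewrite blocks_incr_block by lia. lia.
Qed.

Lemma blocks_incr_of_digits dl : admissible dl -> forall a, a < k * q - 1 ->
  blocks_incr (fst (blocks_of_digits dl)) (snd (blocks_of_digits dl)) a = dl (S a) - dl a.
Proof.
  intros Hv a Ha. destruct Hv as [_ [_ [Hf _]]]. unfold blocks_of_digits. cbn [fst snd].
  set (b := a / k). set (r := a mod k).
  assert (Hr : r < k) by (apply Nat.mod_upper_bound; lia).
  assert (Ea : a = b * k + r) by (unfold b, r; rewrite Nat.mul_comm; apply Nat.div_mod_eq).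
  assert (Hb : b < q) by nia.
  rewrite Ea. destruct (Nat.lt_ge_cases r (k - 1)).
  - rewrite blocks_incr_block, !nth_map_seq by auto. reflexivity.
  - replace r with (k - 1) in * by lia. assert (Hb' : b < q - 1) by nia.
    rewrite blocks_incr_tail. cbn [nth]. rewrite app_nth1 by (rewrite length_map, length_seq; auto).
    rewrite nth_map_seq by auto.
    destruct (Nat.eqb_spec b (q - p - 1)) as [->|]; [|lia].
    replace ((q - p - 1) * k + (k - 1)) with (k * q - 1 - k * p) in * by nia.
    replace (S (k * q - 1 - k * p)) with (k * q - k * p) by nia. lia.
Qed.

Lemma digits_of_blocks_of_digits dl : admissible dl -> forall j, j < k * q ->
  digits_of_blocks (blocks_of_digits dl) j = dl j.
Proof.
  intros Hv j Hj. unfold digits_of_blocks.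
  change (nth 0 (snd (blocks_of_digits dl)) 0) with (dl 0).
  rewrite (sumn_ext _ (fun a => dl (S a) - dl a)).
  - apply sumn_telescope. intros i Hi. destruct Hv as [Hm _]. apply Hm. lia.
  - intros a Ha. apply blocks_incr_of_digits; auto. lia.
Qed.

Lemma blocks_of_digits_comp dl : admissible dl -> block_comp q (k - 1) (d - 2) (blocks_of_digits dl).
Proof.
  intros Hv.
  assert (Hlf : length (snd (blocks_of_digits dl)) = S q).
  { simpl. rewrite length_app, length_map, length_seq. simpl. lia. }
  assert (Hlg : length (fst (blocks_of_digits dl)) = k - 1) by (simpl; rewrite length_map, length_seq; auto).
  assert (Hgq : forall g, In g (fst (blocks_of_digits dl)) -> length g = q).
  { simpl. intros g Hg. apply in_map_iff in Hg. destruct Hg as [r [<- _]]. rewrite length_map, length_seq. auto. }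
  split; [auto|]. split; [|split; [auto|]].
  - intros g Hg. split; [auto|]. simpl in Hg. apply in_map_iff in Hg. destruct Hg as [r [<- Hr]].
    apply in_seq in Hr. destruct Hv as [Hm [_ [_ Hjump]]]. destruct (Hjump r ltac:(lia)) as [a [Ha [Har Hj]]].
    set (b := a / k). assert (Ea : a = b * k + r) by (unfold b; rewrite <- Har, Nat.mul_comm; apply Nat.div_mod_eq).
    rewrite list_sum_map_seq.
    assert (H := sumn_le_range (fun i => dl (S ((0 + i) * k + r)) - dl ((0 + i) * k + r)) (S b) q ltac:(nia)).
    simpl in H. rewrite <- Ea in H. simpl. lia.
  - assert (HR := sumn_blocks_incr _ _ Hlg Hgq Hlf).
    rewrite (sumn_last _ (k * q)), blocks_incr_last in HR by nia.
    rewrite (sumn_ext _ (fun a => dl (S a) - dl a)) in HR by (intros; apply blocks_incr_of_digits; auto).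
    change (nth 0 (snd (blocks_of_digits dl)) 0) with (dl 0) in HR.
    rewrite Nat.add_assoc, sumn_telescope in HR by (intros i Hi; destruct Hv as [Hm _]; apply Hm; lia).
    assert (Hslack : nth q (snd (blocks_of_digits dl)) 0 = d - 1 - dl (k * q - 1)).
    { unfold blocks_of_digits. cbn [snd]. replace q with (S (q - 1)) at 1 by lia. cbn [nth].
      rewrite app_nth2; rewrite length_map, length_seq; [|lia]. rewrite Nat.sub_diag. reflexivity. }
    destruct Hv as [_ [Hl _]]. lia.
Qed.

Lemma blocks_of_digits_of_blocks x : block_comp q (k - 1) (d - 2) x ->
  blocks_of_digits (digits_of_blocks x) = x.
Proof.
  destruct x as [gs f]. intros [H1 [H2 [H3 H4]]]. cbn [fst snd] in *.
  assert (HR := sumn_blocks_incr gs f H1 (fun g Hg => proj1 (H2 g Hg)) H3).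
  assert (HX : forall a, digits_of_blocks (gs, f) (S a) - digits_of_blocks (gs, f) a = blocks_incr gs f a).
  { intros a. unfold digits_of_blocks. simpl. lia. }
  unfold blocks_of_digits. f_equal.
  - apply nth_ext with (d := nil) (d' := nil); rewrite length_map, length_seq; [auto|].
    intros r Hr. rewrite nth_map_seq by auto.
    assert (Hin : In (nth r gs nil) gs) by (apply nth_In; lia).
    apply nth_ext with (d := 0) (d' := 0); rewrite length_map, length_seq; [symmetry; apply H2; auto|].
    intros b Hb. rewrite nth_map_seq, HX, blocks_incr_block by lia. reflexivity.
  - destruct f as [|f0 f']; [discriminate|]. cbn [length] in H3.
    f_equal; [unfold digits_of_blocks; simpl; lia|].
    apply nth_ext with (d := 0) (d' := 0); [rewrite length_app, length_map, length_seq; simpl; lia|].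
    rewrite length_app, length_map, length_seq. intros i Hi. simpl in Hi.
    destruct (Nat.lt_ge_cases i (q - 1)).
    + rewrite app_nth1 by (rewrite length_map, length_seq; auto).
      rewrite nth_map_seq, HX, blocks_incr_tail by auto. simpl. lia.
    + rewrite app_nth2 by (rewrite length_map, length_seq; auto). rewrite length_map, length_seq.
      replace (i - (q - 1)) with 0 by lia. replace i with (q - 1) by lia.
      rewrite (sumn_last _ (k * q)), blocks_incr_last in HR by nia.
      unfold digits_of_blocks. cbn [fst snd].
      assert (Hq1 : nth q (f0 :: f') 0 = nth (q - 1) f' 0) by (replace q with (S (q - 1)) at 1 by lia; reflexivity).
      rewrite Hq1 in HR. simpl in HR, H4. simpl. lia.
Qed.

Lemma blocks_of_digits_ext dl dl' : (forall j, j < k * q -> dl j = dl' j) ->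
  blocks_of_digits dl = blocks_of_digits dl'.
Proof.
  intros H. unfold blocks_of_digits. f_equal.
  - apply map_ext_in. intros r Hr. apply in_seq in Hr. apply map_ext_in. intros b Hb. apply in_seq in Hb.
    rewrite !H by nia. reflexivity.
  - rewrite (H 0), (H (k * q - 1)) by nia. do 2 f_equal.
    apply map_ext_in. intros b Hb. apply in_seq in Hb. rewrite !H by nia. reflexivity.
Qed.

Lemma rot_set_count : has_count (rot_set_k d p q k) (nblock_comps q (k - 1) (d - 2)).
Proof.
  exists (map (fun x => rot_list (digits_of_blocks x)) (block_comps q (k - 1) (d - 2))).
  split; [|split].
  - apply NoDup_map_NoDup_ForallPairs; [|apply NoDup_block_comps].
    intros x y Hx Hy E. apply block_comps_spec in Hx, Hy.
    rewrite <- (blocks_of_digits_of_blocks x), <- (blocks_of_digits_of_blocks y) by auto.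
    apply blocks_of_digits_ext, rot_list_inj, E.
  - intros u. rewrite in_map_iff. split.
    + intros [x [<- Hx]]. apply block_comps_spec in Hx.
      apply rot_list_rot_set, digits_of_blocks_admissible, Hx.
    + intros Hu. destruct (rot_set_admissible u Hu) as [Hv ->].
      exists (blocks_of_digits (first_digit u)). split.
      * apply rot_list_ext, digits_of_blocks_of_digits, Hv.
      * apply block_comps_spec, blocks_of_digits_comp, Hv.
  - apply length_map.
Qed.

End Rotational.

Lemma rec_sum_sumn N k : rec_sum N k = sumn (fun i => binom (k - 1) i * N (S i)) (k - 1).
Proof.
  unfold rec_sum. change (fold_right Nat.add 0) with list_sum.
  rewrite list_sum_map_seq. apply sumn_ext. intros i _. f_equal; f_equal; lia.
Qed.

Theorem theorem3p6 (d q p : nat) :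
  (2 <= d)%nat -> (2 <= q)%nat -> (1 <= p <= q - 1)%nat -> Nat.gcd p q = 1%nat ->
  exists N : nat -> nat,
    (forall k, (1 <= k <= d - 1)%nat -> has_count (rot_set_k d p q k) (N k)) /\
    N 1%nat = binom (d - 2 + q) (d - 2) /\
    (forall k, (2 <= k <= d - 1)%nat ->
       (N k + rec_sum N k)%nat = binom (d - 2 + k * q) (d - 2)).
Proof.
  intros Hd Hq Hp Hgcd.
  exists (fun k => nblock_comps q (k - 1) (d - 2)). split; [|split].
  - intros k Hk. apply rot_set_count; auto; lia.
  - simpl. rewrite nblock_comps0, ncomp_binom. reflexivity.
  - intros k Hk. rewrite rec_sum_sumn.
    replace (k * q)%nat with (S (k - 1) * q)%nat by (f_equal; lia).
    rewrite <- nblock_comps_binom. f_equal. apply sumn_ext. intros i _. do 3 f_equal. lia.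
Qed.
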